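(* Let $n\ge5$ and define $F:(0,\infty)\to\mathbb{R}$ by $$F(\rho)=\pi n^2\int_0^\infty\frac{s^n}{(1+s^n)^2}\frac{ds}{(\rho^2+s)^2}.$$ Then the metric $F(|a|)\,da\,d\bar a$ on $\mathbb{C}^\times=\mathbb{C}\setminus\{0\}$ (which is invariant under $a\mapsto1/a$) extends to a $C^3$ Riemannian metric $\overline\gamma_n$ on the Riemann sphere $S^2=\mathbb{C}^\times\cup\{0,\infty\}$.
   Context: This metric is the pullback of the induced $L^2$ metric on the space ${\sf Rat}_n^{eq}$ of rotationally equivariant degree $n$ rational maps $W(z)=cz^n$, $c\in\mathbb{C}^\times$, under the $n$-fold covering $a\mapsto[z\mapsto(az)^n]$. *)

From Stdlib Require Import Reals.
Open Scope R_scope.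

Definition Fintegrand (n : nat) (rho : R) (s : R) : R :=
  s ^ n / (1 + s ^ n) ^ 2 / (rho ^ 2 + s) ^ 2.

Definition improper_integral_0_inf (f : R -> R) (l : R) : Prop :=
  (forall M, 0 <= M -> inhabited (Riemann_integrable f 0 M)) /\
  (forall eps, 0 < eps -> exists M0, forall M (pr : Riemann_integrable f 0 M),
      M0 <= M -> Rabs (RiemannInt pr - l) < eps).

Definition continuous2 (f : R -> R -> R) : Prop :=
  forall x y eps, 0 < eps -> exists delta, 0 < delta /\
    forall x' y', Rabs (x' - x) < delta -> Rabs (y' - y) < delta ->
      Rabs (f x' y' - f x y) < eps.

Fixpoint Ck2 (k : nat) (f : R -> R -> R) : Prop :=
  match k with
  | O => continuous2 f
  | S k' => continuous2 f /\
      exists fx fy : R -> R -> R,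
        (forall x y, derivable_pt_lim (fun t => f t y) x (fx x y)) /\
        (forall x y, derivable_pt_lim (fun t => f x t) y (fy x y)) /\
        Ck2 k' fx /\ Ck2 k' fy
  end.

From Stdlib Require Import Reals Lra Lia List ClassicalEpsilon.
From Coquelicot Require Import Coquelicot.
Open Scope R_scope.

(* The substitution s = t / (1 - t) turns F(rho) / (pi n^2) into
   int_0^1 P(t) / (rho^2 (1 - t) + t)^2 dt with P(t) = t^n (1-t)^n / (t^n + (1-t)^n)^2.
   Writing rho^2 = x^2 + y^2, this integral makes sense for every (x, y), including
   the origin, because the denominator is at least t^2 while P(t) = O(t^n).
   Differentiating under the integral sign produces terms
   x^a y^b P(t) (1-t)^m / q^k with q = (x^2 + y^2)(1 - t) + t, which remain
   continuous at the origin as long as 2k < a + b + 2n; three derivatives keep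
   this true for n >= 4.  The symmetry P(1 - t) = P(t) gives F(1/rho) = rho^4 F(rho),
   so the same function also serves as the conformal factor in the chart at infinity. *)

Definition clamp01 (t : R) : R := Rmax 0 (Rmin 1 t).

Lemma clamp01_bounds t : 0 <= clamp01 t <= 1.
Proof. unfold clamp01, Rmax, Rmin; repeat destruct Rle_dec; lra. Qed.

Lemma clamp01_id t : 0 <= t <= 1 -> clamp01 t = t.
Proof. intros; unfold clamp01, Rmax, Rmin; repeat destruct Rle_dec; lra. Qed.

Lemma clamp01_lipschitz t s : Rabs (clamp01 t - clamp01 s) <= Rabs (t - s).
Proof.
  unfold clamp01, Rmax, Rmin; repeat destruct Rle_dec;
  unfold Rabs; repeat destruct Rcase_abs; lra.
Qed.

Lemma continuous_clamp01 t : continuous clamp01 t.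
Proof.
  apply (proj2 (filterlim_locally _ _)). intros eps. exists eps.
  intros s Hs. change (Rabs (clamp01 s - clamp01 t) < eps).
  eapply Rle_lt_trans; [apply clamp01_lipschitz | exact Hs].
Qed.

Definition weight_den (n : nat) (t : R) : R := (1 - t) ^ n + t ^ n.

Definition weight (n : nat) (t : R) : R := t ^ n * (1 - t) ^ n / weight_den n t ^ 2.

Lemma weight_den_pos n t : 0 <= t <= 1 -> 0 < weight_den n t.
Proof.
  intros Ht. unfold weight_den.
  destruct (Req_dec t 1) as [->|Ht1].
  - rewrite pow1. pose proof (pow_le (1 - 1) n ltac:(lra)). lra.
  - pose proof (pow_lt (1 - t) n ltac:(lra)). pose proof (pow_le t n ltac:(lra)). lra.
Qed.

Lemma weight_0 n : (0 < n)%nat -> weight n 0 = 0.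
Proof. intros; unfold weight; rewrite pow_i by lia; unfold Rdiv; ring. Qed.

Lemma weight_sym n t : weight n (1 - t) = weight n t.
Proof.
  unfold weight, weight_den. replace (1 - (1 - t)) with t by ring.
  rewrite (Rplus_comm (t ^ n)). unfold Rdiv; ring.
Qed.

Lemma weight_pos n t : 0 < t < 1 -> 0 < weight n t.
Proof.
  intros Ht. apply Rdiv_lt_0_compat.
  - apply Rmult_lt_0_compat; apply pow_lt; lra.
  - apply pow_lt, weight_den_pos; lra.
Qed.

Lemma weight_bounds n t : 0 <= t <= 1 -> 0 <= weight n t <= 1.
Proof.
  intros Ht. pose proof (weight_den_pos n t Ht) as HD. unfold weight, weight_den in *.
  pose proof (pow_le t n ltac:(lra)). pose proof (pow_le (1 - t) n ltac:(lra)).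
  set (A := t ^ n) in *. set (B := (1 - t) ^ n) in *.
  assert (HD2 : 0 < (B + A) ^ 2) by (apply pow_lt; lra).
  split.
  - apply Rmult_le_pos; [nra | apply Rlt_le, Rinv_0_lt_compat; exact HD2].
  - apply (Rmult_le_reg_r ((B + A) ^ 2)); [exact HD2|].
    unfold Rdiv. rewrite Rmult_assoc, Rinv_l by lra. nra.
Qed.

Lemma weight_le_pow n t : 0 <= t <= 1/2 -> weight n t <= (2 * t) ^ n.
Proof.
  intros Ht. pose proof (weight_den_pos n t ltac:(lra)) as HD.
  set (w := (1 - t) ^ n).
  assert (Hw : 0 < w) by (apply pow_lt; lra).
  assert (Hwd : w <= weight_den n t)
    by (unfold w, weight_den; pose proof (pow_le t n ltac:(lra)); lra).
  apply Rle_trans with (t ^ n / w).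
  - replace (t ^ n / w) with (t ^ n * w / w ^ 2) by (field; lra).
    unfold weight, Rdiv. fold w.
    apply Rmult_le_compat_l; [pose proof (pow_le t n ltac:(lra)); nra|].
    apply Rinv_le_contravar; [apply pow_lt; lra | apply pow_incr; lra].
  - unfold w, Rdiv. rewrite <- pow_inv, <- Rpow_mult_distr.
    apply pow_incr. split.
    + apply Rmult_le_pos; [lra | apply Rlt_le, Rinv_0_lt_compat; lra].
    + apply (Rmult_le_reg_r (1 - t)); [lra|].
      rewrite Rmult_assoc, Rinv_l by lra. nra.
Qed.

Definition qden (x y t : R) : R := (x ^ 2 + y ^ 2) * (1 - t) + t.

Lemma qden_pos x y t : 0 < t <= 1 -> 0 < qden x y t.
Proof. intros; unfold qden. assert (0 <= x ^ 2 + y ^ 2) by nra. nra. Qed.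

Lemma qden_swap x y t : qden y x t = qden x y t.
Proof. unfold qden; ring. Qed.

(* [Mono c a b m k] stands for c x^a y^b P(t) (1 - t)^m / q^k, with [weight] the P of
   the substitution and [qden] the q. *)
Record mono := Mono { coef : R; xdeg : nat; ydeg : nat; wdeg : nat; qdeg : nat }.

(* [t] is clamped to [0, 1] so that monomials are continuous on all of R^3;
   only their values for [t] in [0, 1] are ever integrated. *)
Definition eval_mono (n : nat) (m : mono) (x y t : R) : R :=
  coef m * x ^ xdeg m * y ^ ydeg m * weight n (clamp01 t)
  * (1 - clamp01 t) ^ wdeg m * (/ qden x y (clamp01 t)) ^ qdeg m.

Fixpoint eval_monos (n : nat) (l : list mono) (x y t : R) : R :=
  match l with
  | nil => 0
  | m :: l' => eval_mono n m x y t + eval_monos n l' x y t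
  end.

Lemma eval_monos_app n l1 l2 x y t :
  eval_monos n (l1 ++ l2) x y t = eval_monos n l1 x y t + eval_monos n l2 x y t.
Proof. induction l1 as [|m l1 IH]; simpl; [ring | rewrite IH; ring]. Qed.

Definition swap_mono (m : mono) : mono :=
  Mono (coef m) (ydeg m) (xdeg m) (wdeg m) (qdeg m).

Lemma eval_monos_swap n l x y t :
  eval_monos n (map swap_mono l) y x t = eval_monos n l x y t.
Proof.
  induction l as [|m l IH]; simpl; [reflexivity|]. rewrite IH.
  unfold eval_mono; simpl. rewrite qden_swap. ring.
Qed.

Lemma eval_mono_clamp0 n m x y t :
  (0 < n)%nat -> clamp01 t = 0 -> eval_mono n m x y t = 0.
Proof. intros Hn Hc. unfold eval_mono. rewrite Hc, weight_0 by exact Hn. ring. Qed.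

Definition dx_mono (m : mono) : list mono :=
  Mono (coef m * INR (xdeg m)) (pred (xdeg m)) (ydeg m) (wdeg m) (qdeg m) ::
  Mono (coef m * (-2 * INR (qdeg m))) (S (xdeg m)) (ydeg m) (S (wdeg m)) (S (qdeg m))
  :: nil.

Definition dx_monos (l : list mono) : list mono := flat_map dx_mono l.

Definition dy_monos (l : list mono) : list mono :=
  map swap_mono (dx_monos (map swap_mono l)).

(* [is_derive_ext] states its equation in the carrier of a normed module, which [ring]
   does not recognise as [R]. *)
Lemma is_derive_ext_real (f g : R -> R) (x l : R) :
  (forall z, f z = g z) -> is_derive f x l -> is_derive g x l.
Proof. apply is_derive_ext. Qed.

Lemma is_derive_pow_inv_quadratic (K : R) (a k : nat) (w s x : R) :
  x ^ 2 * w + s <> 0 ->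
  is_derive (fun z => K * z ^ a * (/ (z ^ 2 * w + s)) ^ k) x
   (K * INR a * x ^ (pred a) * (/ (x ^ 2 * w + s)) ^ k
    + K * (-2 * INR k) * x ^ (S a) * w * (/ (x ^ 2 * w + s)) ^ (S k)).
Proof.
  intros Hq. assert (Hq' : x * x * w + s <> 0) by (simpl in Hq; rewrite Rmult_1_r in Hq; exact Hq).
  evar (l : R). replace (_ + _) with l; unfold l.
  { apply (is_derive_mult (fun z => K * z ^ a) (fun z => (/ (z ^ 2 * w + s)) ^ k)).
    - apply is_derive_scal, is_derive_pow, is_derive_id.
    - apply is_derive_pow, is_derive_inv; [|exact Hq].
      auto_derive; [exact I | reflexivity].
    - intros; apply Rmult_comm. }
  simpl. unfold plus, mult, one; simpl.
  destruct a as [|a]; destruct k as [|k]; simpl pred; simpl INR; simpl pow;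
    rewrite ?S_INR; field; exact Hq'.
Qed.

Lemma is_derive_eval_mono_x n m x y t : (0 < n)%nat ->
  is_derive (fun z => eval_mono n m z y t) x (eval_monos n (dx_mono m) x y t).
Proof.
  intros Hn. pose proof (clamp01_bounds t) as Hb. set (s := clamp01 t) in *.
  destruct (Req_dec s 0) as [Hz|Hz].
  - apply (is_derive_ext_real (fun _ => 0)).
    { intros z. symmetry. apply eval_mono_clamp0; assumption. }
    simpl. rewrite !eval_mono_clamp0 by assumption. rewrite !Rplus_0_r.
    apply (is_derive_const (V:=R_NormedModule)).
  - set (w := 1 - s). set (r := y ^ 2 * w + s).
    set (K := coef m * y ^ ydeg m * weight n s * w ^ wdeg m).
    assert (Hq : forall z, qden z y s = z ^ 2 * w + r) by (intros; unfold qden, r, w; ring).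
    apply (is_derive_ext_real (fun z => K * z ^ xdeg m * (/ (z ^ 2 * w + r)) ^ qdeg m)).
    { intros z. unfold eval_mono. fold s. rewrite Hq. unfold K, w. ring. }
    evar (l : R). replace (eval_monos _ _ _ _ _) with l; unfold l.
    + apply is_derive_pow_inv_quadratic. rewrite <- Hq.
      apply Rgt_not_eq, qden_pos; lra.
    + cbn [eval_monos dx_mono]. unfold eval_mono. cbn [coef xdeg ydeg wdeg qdeg].
      fold s. rewrite !Hq. unfold K, w. cbn [pow]. ring.
Qed.

Lemma is_derive_eval_monos_x n l x y t : (0 < n)%nat ->
  is_derive (fun z => eval_monos n l z y t) x (eval_monos n (dx_monos l) x y t).
Proof.
  intros Hn. induction l as [|m l IH].
  - apply (is_derive_ext_real (fun _ => 0)); [reflexivity|].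
    apply (is_derive_const (V:=R_NormedModule)).
  - change (dx_monos (m :: l)) with (dx_mono m ++ dx_monos l). rewrite eval_monos_app.
    apply (is_derive_plus (V:=R_NormedModule)); [apply is_derive_eval_mono_x|]; assumption.
Qed.

(* An x-derivative lowers [xdeg], or raises [xdeg] and [qdeg], by one; either way
   [2 qdeg - xdeg - ydeg] grows by one, so [admissible n j] survives [j] derivatives
   while staying continuous at the origin. *)
Definition admissible (n j : nat) (m : mono) : Prop :=
  (2 * qdeg m + 1 + j <= xdeg m + ydeg m + 2 * n)%nat.

Lemma admissible_dx_monos n j l :
  List.Forall (admissible n (S j)) l -> List.Forall (admissible n j) (dx_monos l).
Proof.
  intros H. induction H as [|m l Hm _ IH]; [constructor|].
  change (dx_monos (m :: l)) with (dx_mono m ++ dx_monos l).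
  apply Forall_app; split; [|exact IH].
  unfold admissible in *.
  constructor; [simpl; lia|]. constructor; [simpl; lia|constructor].
Qed.

Lemma admissible_swap n j l :
  List.Forall (admissible n j) l -> List.Forall (admissible n j) (map swap_mono l).
Proof.
  intros H. apply List.Forall_map. revert H. apply List.Forall_impl.
  unfold admissible; simpl; lia.
Qed.

Lemma admissible_dy_monos n j l :
  List.Forall (admissible n (S j)) l -> List.Forall (admissible n j) (dy_monos l).
Proof. intros H. apply admissible_swap, admissible_dx_monos, admissible_swap, H. Qed.

Lemma admissible_le n i j l :
  (i <= j)%nat -> List.Forall (admissible n j) l -> List.Forall (admissible n i) l.
Proof. intros Hij. apply List.Forall_impl. unfold admissible. lia. Qed.

Definition continuous3 (h : R -> R -> R -> R) (x y t : R) : Prop :=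
  forall eps, 0 < eps -> exists d, 0 < d /\ forall x' y' t',
    Rabs (x' - x) < d -> Rabs (y' - y) < d -> Rabs (t' - t) < d ->
    Rabs (h x' y' t' - h x y t) < eps.

Notation R3 := ((R * R) * R)%type.

Lemma continuous3_of_continuous (h : R -> R -> R -> R) x y t :
  continuous (fun p : R3 => h (fst (fst p)) (snd (fst p)) (snd p)) ((x, y), t) ->
  continuous3 h x y t.
Proof.
  intros Hc eps Heps.
  destruct (proj1 (filterlim_locally _ _) Hc (mkposreal eps Heps)) as [d Hd].
  exists d. split; [apply cond_pos|]. intros x' y' t' Hx Hy Ht.
  apply (Hd ((x', y'), t')). repeat split; assumption.
Qed.

Lemma continuous3_plus (f g : R -> R -> R -> R) x y t :
  continuous3 f x y t -> continuous3 g x y t ->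
  continuous3 (fun a b c => f a b c + g a b c) x y t.
Proof.
  intros Hf Hg eps Heps.
  destruct (Hf (eps / 2) ltac:(lra)) as [d1 [Hd1 H1]].
  destruct (Hg (eps / 2) ltac:(lra)) as [d2 [Hd2 H2]].
  exists (Rmin d1 d2). split; [apply Rmin_pos; assumption|].
  intros x' y' t' Hx Hy Ht.
  pose proof (Rmin_l d1 d2). pose proof (Rmin_r d1 d2).
  specialize (H1 x' y' t' ltac:(lra) ltac:(lra) ltac:(lra)).
  specialize (H2 x' y' t' ltac:(lra) ltac:(lra) ltac:(lra)).
  replace (f x' y' t' + g x' y' t' - (f x y t + g x y t)) with
    ((f x' y' t' - f x y t) + (g x' y' t' - g x y t)) by ring.
  eapply Rle_lt_trans; [apply Rabs_triang | lra].
Qed.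

Section ContinuityOnR3.

Variable p : R3.

Lemma continuous_R3_mult (f g : R3 -> R) : continuous f p -> continuous g p ->
  continuous (fun q => f q * g q) p.
Proof. apply (continuous_mult (K:=R_AbsRing)). Qed.

Lemma continuous_R3_plus (f g : R3 -> R) : continuous f p -> continuous g p ->
  continuous (fun q => f q + g q) p.
Proof. apply (continuous_plus (V:=R_NormedModule)). Qed.

Lemma continuous_R3_comp (f : R3 -> R) (g : R -> R) : continuous f p ->
  continuous g (f p) -> continuous (fun q => g (f q)) p.
Proof. apply continuous_comp. Qed.

Lemma continuous_R3_smooth (f : R3 -> R) (g : R -> R) : continuous f p ->
  ex_derive g (f p) -> continuous (fun q => g (f q)) p.
Proof.
  intros Hf Hg. apply continuous_R3_comp; [exact Hf|].
  apply (ex_derive_continuous (V:=R_NormedModule)), Hg.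
Qed.

Lemma continuous_R3_x : continuous (fun q : R3 => fst (fst q)) p.
Proof. apply (continuous_comp (fun q : R3 => fst q) fst); apply continuous_fst. Qed.

Lemma continuous_R3_y : continuous (fun q : R3 => snd (fst q)) p.
Proof.
  apply (continuous_comp (fun q : R3 => fst q) snd);
    [apply continuous_fst | apply continuous_snd].
Qed.

Lemma continuous_R3_clamp01 : continuous (fun q : R3 => clamp01 (snd q)) p.
Proof.
  apply continuous_R3_comp; [apply continuous_snd | apply continuous_clamp01].
Qed.

End ContinuityOnR3.

Lemma continuous3_eval_mono_regular n m x y t : qden x y (clamp01 t) <> 0 ->
  continuous3 (eval_mono n m) x y t.
Proof.
  intros Hq. apply continuous3_of_continuous. unfold eval_mono.
  pose proof (clamp01_bounds t) as Hb.
  apply continuous_R3_mult; [apply continuous_R3_mult; [apply continuous_R3_mult;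
    [apply continuous_R3_mult; [apply continuous_R3_mult|]|]|]|].
  - apply continuous_const.
  - apply (continuous_R3_smooth _ _ (fun z => z ^ _)); [apply continuous_R3_x|].
    auto_derive; exact I.
  - apply (continuous_R3_smooth _ _ (fun z => z ^ _)); [apply continuous_R3_y|].
    auto_derive; exact I.
  - apply (continuous_R3_smooth _ _ (weight n)); [apply continuous_R3_clamp01|].
    pose proof (weight_den_pos n _ Hb) as HD. unfold weight, weight_den in *.
    auto_derive. repeat split; try exact I.
    cbn [snd]. replace (1 + - clamp01 t) with (1 - clamp01 t) by ring. nra.
  - apply (continuous_R3_smooth _ _ (fun s => (1 - s) ^ _));
      [apply continuous_R3_clamp01|].
    auto_derive; exact I.
  - apply (continuous_R3_smooth _ _ (fun z => (/ z) ^ _)).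
    + unfold qden. apply continuous_R3_plus; [apply continuous_R3_mult|apply continuous_R3_clamp01].
      1: apply continuous_R3_plus.
      * apply (continuous_R3_smooth _ _ (fun z => z ^ 2)); [apply continuous_R3_x|].
        auto_derive; exact I.
      * apply (continuous_R3_smooth _ _ (fun z => z ^ 2)); [apply continuous_R3_y|].
        auto_derive; exact I.
      * apply (continuous_R3_smooth _ _ (fun s => 1 - s)); [apply continuous_R3_clamp01|].
        auto_derive; exact I.
    + auto_derive. exact Hq.
Qed.

Lemma Rmult6_le_compat u1 u2 u3 u4 u5 u6 v1 v2 v3 v4 v5 v6 :
  0 <= u1 <= v1 -> 0 <= u2 <= v2 -> 0 <= u3 <= v3 -> 0 <= u4 <= v4 ->
  0 <= u5 <= v5 -> 0 <= u6 <= v6 ->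
  u1 * u2 * u3 * u4 * u5 * u6 <= v1 * v2 * v3 * v4 * v5 * v6.
Proof.
  intros [? ?] [? ?] [? ?] [? ?] [? ?] [? ?].
  repeat apply Rmult_le_compat; try assumption; repeat apply Rmult_le_pos; assumption.
Qed.

Lemma pow_le_1 (x : R) (k : nat) : 0 <= x <= 1 -> x ^ k <= 1.
Proof. intros Hx. rewrite <- (pow1 k). apply pow_incr, Hx. Qed.

Lemma pow_le_self (q : R) (e : nat) : 0 <= q <= 1 -> (1 <= e)%nat -> q ^ e <= q.
Proof.
  intros Hq He. destruct e as [|e]; [lia|]. simpl.
  pose proof (pow_le_1 q e Hq). pose proof (pow_le q e ltac:(lra)). nra.
Qed.

Lemma sqr_pow (x : R) (a : nat) : (x ^ a) ^ 2 = (x ^ 2) ^ a.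
Proof. rewrite <- !pow_mult, Nat.mul_comm; reflexivity. Qed.

(* Near the origin [x^2, y^2, s <= 2q] and the weight is O(s^n), so an
   admissible monomial is O(q^(1/2)). *)
Lemma eval_mono_sqr_le n m x y t :
  admissible n 0 m -> 0 < clamp01 t <= 1/2 -> qden x y (clamp01 t) <= 1 ->
  eval_mono n m x y t ^ 2
  <= coef m ^ 2 * 2 ^ (xdeg m + ydeg m + 2 * n) * qden x y (clamp01 t).
Proof.
  intros Hadm Hs Hq1. unfold admissible in Hadm.
  set (s := clamp01 t) in *. set (q := qden x y s) in *.
  set (N := (xdeg m + ydeg m + 2 * n)%nat).
  assert (Hq : 0 < q) by (apply qden_pos; lra).
  assert (HX : x ^ 2 <= 2 * q) by (unfold q, qden; nra).
  assert (HY : y ^ 2 <= 2 * q) by (unfold q, qden; nra).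
  assert (HW : weight n s <= (2 * q) ^ n).
  { eapply Rle_trans; [apply weight_le_pow; lra|].
    apply pow_incr. unfold q, qden. nra. }
  pose proof (weight_bounds n s ltac:(lra)) as [HW0 _].
  assert (E : eval_mono n m x y t ^ 2 = coef m ^ 2 * (x ^ 2) ^ xdeg m * (y ^ 2) ^ ydeg m *
     weight n s ^ 2 * ((1 - s) ^ wdeg m) ^ 2 * ((/ q) ^ qdeg m) ^ 2).
  { unfold eval_mono. fold s q. rewrite <- !sqr_pow. ring. }
  rewrite E.
  eapply Rle_trans.
  { apply (Rmult6_le_compat _ _ _ _ _ _ (coef m ^ 2) ((2 * q) ^ xdeg m) ((2 * q) ^ ydeg m)
      (((2 * q) ^ n) ^ 2) 1 (((/ q) ^ qdeg m) ^ 2)).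
    - split; [apply pow2_ge_0 | lra].
    - split; [apply pow_le, pow2_ge_0 | apply pow_incr; split; [apply pow2_ge_0 | lra]].
    - split; [apply pow_le, pow2_ge_0 | apply pow_incr; split; [apply pow2_ge_0 | lra]].
    - split; [apply pow2_ge_0 | apply pow_incr; lra].
    - split; [apply pow2_ge_0 | apply pow_le_1].
      split; [apply pow_le | apply pow_le_1]; lra.
    - split; [apply pow2_ge_0 | lra]. }
  assert (Hpow : (2 * q) ^ xdeg m * (2 * q) ^ ydeg m * ((2 * q) ^ n) ^ 2
                 = 2 ^ N * q ^ (N - 2 * qdeg m) * (q ^ qdeg m) ^ 2).
  { rewrite <- pow_mult, <- !pow_add, Rpow_mult_distr, <- pow_mult, Rmult_assoc, <- pow_add.
    unfold N. do 2 f_equal; lia. }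
  assert (Hinv : (q ^ qdeg m) ^ 2 * ((/ q) ^ qdeg m) ^ 2 = 1).
  { rewrite <- Rpow_mult_distr, <- Rpow_mult_distr, Rinv_r, !pow1 by lra. reflexivity. }
  replace (coef m ^ 2 * (2 * q) ^ xdeg m * (2 * q) ^ ydeg m * ((2 * q) ^ n) ^ 2 * 1
           * ((/ q) ^ qdeg m) ^ 2)
    with (coef m ^ 2 * ((2 * q) ^ xdeg m * (2 * q) ^ ydeg m * ((2 * q) ^ n) ^ 2)
          * ((/ q) ^ qdeg m) ^ 2) by ring.
  rewrite Hpow.
  replace (coef m ^ 2 * (2 ^ N * q ^ (N - 2 * qdeg m) * (q ^ qdeg m) ^ 2) * ((/ q) ^ qdeg m) ^ 2)
    with (coef m ^ 2 * 2 ^ N * q ^ (N - 2 * qdeg m)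
          * ((q ^ qdeg m) ^ 2 * ((/ q) ^ qdeg m) ^ 2)) by ring.
  rewrite Hinv, Rmult_1_r.
  apply Rmult_le_compat_l.
  - apply Rmult_le_pos; [apply pow2_ge_0 | apply pow_le; lra].
  - apply pow_le_self; [lra | unfold N; lia].
Qed.

Lemma continuous3_eval_mono_origin n m t0 : (0 < n)%nat ->
  admissible n 0 m -> clamp01 t0 = 0 -> continuous3 (eval_mono n m) 0 0 t0.
Proof.
  intros Hn Hadm Ht0 eps Heps.
  set (C := coef m ^ 2 * 2 ^ (xdeg m + ydeg m + 2 * n)).
  assert (HC : 0 <= C) by (apply Rmult_le_pos; [apply pow2_ge_0 | apply pow_le; lra]).
  set (d := Rmin (1 / 4) (eps ^ 2 / (2 * (C + 1)))).
  assert (Hd0 : 0 < d) by (apply Rmin_pos; [lra | apply Rdiv_lt_0_compat; nra]).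
  assert (Hd1 : d <= 1 / 4) by apply Rmin_l.
  assert (Hd2 : 2 * d * (C + 1) <= eps ^ 2).
  { pose proof (Rmin_r (1 / 4) (eps ^ 2 / (2 * (C + 1)))) as H. fold d in H.
    apply (Rmult_le_compat_r (2 * (C + 1))) in H; [|lra].
    unfold Rdiv in H. rewrite Rmult_assoc, Rinv_l, Rmult_1_r in H by lra. lra. }
  exists d. split; [exact Hd0|]. intros x y t Hx Hy Ht.
  rewrite (eval_mono_clamp0 n m 0 0 t0 Hn Ht0), Rminus_0_r.
  rewrite Rminus_0_r in Hx, Hy.
  pose proof (clamp01_lipschitz t t0) as Hl. rewrite Ht0, Rminus_0_r in Hl.
  pose proof (clamp01_bounds t) as Hb.
  assert (Hs : clamp01 t < d) by (pose proof (RRle_abs (clamp01 t)); lra).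
  destruct (Req_dec (clamp01 t) 0) as [Hz|Hz].
  { rewrite eval_mono_clamp0, Rabs_R0 by assumption. exact Heps. }
  assert (Hq : qden x y (clamp01 t) < 2 * d).
  { assert (x ^ 2 <= d ^ 2) by (rewrite <- (pow2_abs x); apply pow_incr; split; [apply Rabs_pos | lra]).
    assert (y ^ 2 <= d ^ 2) by (rewrite <- (pow2_abs y); apply pow_incr; split; [apply Rabs_pos | lra]).
    unfold qden. nra. }
  pose proof (eval_mono_sqr_le n m x y t Hadm ltac:(lra) ltac:(lra)) as Hsq. fold C in Hsq.
  assert (Hlt : Rabs (eval_mono n m x y t) ^ 2 < eps ^ 2).
  { rewrite pow2_abs. pose proof (qden_pos x y (clamp01 t) ltac:(lra)). nra. }
  pose proof (Rabs_pos (eval_mono n m x y t)). nra.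
Qed.

Lemma continuous3_eval_mono n m x y t : (0 < n)%nat -> admissible n 0 m ->
  continuous3 (eval_mono n m) x y t.
Proof.
  intros Hn Hadm. pose proof (clamp01_bounds t) as Hb.
  destruct (Req_dec (qden x y (clamp01 t)) 0) as [Hq|Hq].
  - destruct (Req_dec (clamp01 t) 0) as [Hz|Hz].
    + unfold qden in Hq. rewrite Hz in Hq.
      assert (x = 0) by nra. assert (y = 0) by nra. subst.
      apply continuous3_eval_mono_origin; assumption.
    + exfalso. pose proof (qden_pos x y (clamp01 t)). lra.
  - apply continuous3_eval_mono_regular, Hq.
Qed.

Lemma continuous3_eval_monos n l x y t : (0 < n)%nat ->
  List.Forall (admissible n 0) l -> continuous3 (eval_monos n l) x y t.
Proof.
  intros Hn Hl. induction Hl as [|m l Hm _ IH].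
  - intros eps Heps. exists 1. split; [lra|]. intros. simpl.
    rewrite Rminus_0_r, Rabs_R0. exact Heps.
  - apply (continuous3_plus (eval_mono n m) (eval_monos n l)); [|exact IH].
    apply continuous3_eval_mono; assumption.
Qed.

Lemma continuous3_slice_t (h : R -> R -> R -> R) x y t :
  continuous3 h x y t -> continuous (h x y) t.
Proof.
  intros H. apply (proj2 (filterlim_locally _ _)). intros eps.
  destruct (H eps (cond_pos eps)) as [d [Hd Hh]].
  exists (mkposreal d Hd). intros s Hs.
  apply Hh; [rewrite Rminus_eq_0, Rabs_R0; exact Hd | rewrite Rminus_eq_0, Rabs_R0; exact Hd | exact Hs].
Qed.

Lemma continuous3_slice_xt (h : R -> R -> R -> R) x y t :
  continuous3 h x y t -> continuity_2d_pt (fun u v => h u y v) x t.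
Proof.
  intros H eps. destruct (H eps (cond_pos eps)) as [d [Hd Hh]].
  exists (mkposreal d Hd). intros u v Hu Hv.
  apply Hh; [exact Hu | rewrite Rminus_eq_0, Rabs_R0; exact Hd | exact Hv].
Qed.

Lemma ex_RInt_continuous3 (h : R -> R -> R -> R) x y :
  (forall t, continuous3 h x y t) -> ex_RInt (h x y) 0 1.
Proof.
  intros H. apply (ex_RInt_continuous (V:=R_CompleteNormedModule)).
  intros t _. apply continuous3_slice_t, H.
Qed.

(* A compactness argument on [0, 1] makes the continuity in (x, y) uniform in t. *)
Lemma continuous3_uniform_01 (h : R -> R -> R -> R) x y eps :
  (forall t, continuous3 h x y t) -> 0 < eps ->
  exists d, 0 < d /\ forall x' y', Rabs (x' - x) < d -> Rabs (y' - y) < d ->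
    forall t, 0 <= t <= 1 -> Rabs (h x' y' t - h x y t) <= eps.
Proof.
  intros Hc Heps.
  assert (Heps2 : 0 < eps / 2) by lra.
  set (dl := fun t => constructive_indefinite_description _ (Hc t (eps / 2) Heps2)).
  set (delta := fun t => mkposreal (proj1_sig (dl t)) (proj1 (proj2_sig (dl t)))).
  destruct (compactness_value_1d 0 1 delta) as [d Hd].
  exists d. split; [apply cond_pos|]. intros x' y' Hx Hy t Ht.
  apply Rnot_lt_le. intros Hbad. apply (Hd t Ht). intros [ti [_ [Htti Hdti]]].
  destruct (proj2_sig (dl ti)) as [Hpos Hti]. cbv zeta in Hti.
  unfold delta in Htti, Hdti; simpl in Htti, Hdti.
  assert (H1 := Hti x' y' t ltac:(lra) ltac:(lra) Htti).
  assert (H2 := Hti x y t ltac:(rewrite Rminus_eq_0, Rabs_R0; lra)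
                  ltac:(rewrite Rminus_eq_0, Rabs_R0; lra) Htti).
  assert (Rabs (h x' y' t - h x y t) <= Rabs (h x' y' t - h x y ti) + Rabs (h x y t - h x y ti)).
  { replace (h x' y' t - h x y t) with ((h x' y' t - h x y ti) - (h x y t - h x y ti)) by ring.
    eapply Rle_trans; [apply Rabs_triang | rewrite Rabs_Ropp; lra]. }
  lra.
Qed.

Lemma continuous2_RInt_01 (h : R -> R -> R -> R) :
  (forall x y t, continuous3 h x y t) -> continuous2 (fun x y => RInt (h x y) 0 1).
Proof.
  intros Hc x y eps Heps.
  destruct (continuous3_uniform_01 h x y (eps / 2) (Hc x y) ltac:(lra)) as [d [Hd Hunif]].
  exists d. split; [exact Hd|]. intros x' y' Hx Hy.
  assert (E1 : ex_RInt (h x' y') 0 1) by (apply ex_RInt_continuous3, Hc).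
  assert (E2 : ex_RInt (h x y) 0 1) by (apply ex_RInt_continuous3, Hc).
  rewrite <- (RInt_minus (V:=R_CompleteNormedModule)) by assumption.
  eapply Rle_lt_trans.
  { apply (abs_RInt_le_const (fun t => h x' y' t - h x y t) 0 1 (eps / 2)); [lra| |].
    - apply (ex_RInt_minus (V:=R_NormedModule)); assumption.
    - apply Hunif; assumption. }
  lra.
Qed.

Definition param_integral (n : nat) (l : list mono) (x y : R) : R :=
  RInt (eval_monos n l x y) 0 1.

Lemma param_integral_swap n l x y :
  param_integral n (map swap_mono l) y x = param_integral n l x y.
Proof. apply RInt_ext. intros t _. apply eval_monos_swap. Qed.

Lemma continuous2_param_integral n l : (0 < n)%nat ->
  List.Forall (admissible n 0) l -> continuous2 (param_integral n l).
Proof.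
  intros Hn Hl. apply continuous2_RInt_01. intros x y t.
  apply continuous3_eval_monos; assumption.
Qed.

Lemma derivable_param_integral_x n l x y : (0 < n)%nat ->
  List.Forall (admissible n 1) l ->
  derivable_pt_lim (fun z => param_integral n l z y) x (param_integral n (dx_monos l) x y).
Proof.
  intros Hn Hl. apply is_derive_Reals. unfold param_integral.
  assert (HD : forall u v, Derive (fun z => eval_monos n l z y v) u = eval_monos n (dx_monos l) u y v)
    by (intros; apply is_derive_unique, is_derive_eval_monos_x, Hn).
  evar (D : R). replace (RInt _ 0 1) with D; unfold D.
  - apply (is_derive_RInt_param (fun u t => eval_monos n l u y t) 0 1 x).
    + apply filter_forall. intros u t _. eexists. apply is_derive_eval_monos_x, Hn.
    + intros t _. eapply continuity_2d_pt_ext; [intros u v; symmetry; apply HD|].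
      apply continuous3_slice_xt, continuous3_eval_monos; [exact Hn|].
      apply admissible_dx_monos, Hl.
    + apply filter_forall. intros u. apply ex_RInt_continuous3. intros t.
      apply continuous3_eval_monos; [exact Hn|]. apply (admissible_le n 0 1); [lia | exact Hl].
  - apply RInt_ext. intros t _. apply HD.
Qed.

Lemma derivable_param_integral_y n l x y : (0 < n)%nat ->
  List.Forall (admissible n 1) l ->
  derivable_pt_lim (fun z => param_integral n l x z) y (param_integral n (dy_monos l) x y).
Proof.
  intros Hn Hl. unfold dy_monos. rewrite param_integral_swap.
  apply (derivable_pt_lim_ext (fun z => param_integral n (map swap_mono l) z x)).
  { intros z. apply param_integral_swap. }
  apply derivable_param_integral_x, admissible_swap; assumption.
Qed.

Lemma Ck2_param_integral n j l : (0 < n)%nat ->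
  List.Forall (admissible n j) l -> Ck2 j (param_integral n l).
Proof.
  intros Hn. revert l. induction j as [|j IH]; intros l Hl.
  - apply continuous2_param_integral; assumption.
  - split.
    + apply continuous2_param_integral; [exact Hn|].
      apply (admissible_le n 0 (S j)); [lia | exact Hl].
    + assert (Hl1 : List.Forall (admissible n 1) l) by (apply (admissible_le n 1 (S j)); [lia | exact Hl]).
      exists (param_integral n (dx_monos l)), (param_integral n (dy_monos l)).
      split; [|split; [|split]].
      * intros x y. apply derivable_param_integral_x; assumption.
      * intros x y. apply derivable_param_integral_y; assumption.
      * apply IH, admissible_dx_monos, Hl.
      * apply IH, admissible_dy_monos, Hl.
Qed.

Definition kernel (n : nat) (u t : R) : R := weight n t / (u * (1 - t) + t) ^ 2.

Lemma kernel_den_pos u t : 0 < u -> 0 <= t <= 1 -> 0 < u * (1 - t) + t.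
Proof. intros. destruct (Req_dec t 0); [subst; lra | nra]. Qed.

Lemma continuous_kernel n u t : 0 < u -> 0 <= t <= 1 -> continuous (kernel n u) t.
Proof.
  intros Hu Ht. apply (ex_derive_continuous (V:=R_NormedModule)).
  pose proof (weight_den_pos n t Ht). pose proof (kernel_den_pos u t Hu Ht).
  unfold kernel, weight, weight_den in *. auto_derive. repeat split; try exact I.
  - replace (1 + - t) with (1 - t) by ring. nra.
  - replace (u * (1 + - t) + t) with (u * (1 - t) + t) by ring. nra.
Qed.

Lemma ex_RInt_kernel n u a b : 0 < u -> 0 <= a <= b -> b <= 1 -> ex_RInt (kernel n u) a b.
Proof.
  intros Hu Hab Hb. apply (ex_RInt_continuous (V:=R_CompleteNormedModule)).
  intros z Hz. rewrite Rmin_left, Rmax_right in Hz by lra.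
  apply continuous_kernel; [exact Hu | lra].
Qed.

Lemma kernel_le n u t : 0 < u -> 0 <= t <= 1 -> 0 <= kernel n u t <= / Rmin u 1 ^ 2.
Proof.
  intros Hu Ht. pose proof (weight_bounds n t Ht) as [HP0 HP1].
  pose proof (Rmin_l u 1). pose proof (Rmin_r u 1).
  set (m := Rmin u 1) in *.
  assert (Hm : 0 < m) by (apply Rmin_pos; lra).
  assert (Hden : m <= u * (1 - t) + t) by nra.
  assert (Hd2 : m ^ 2 <= (u * (1 - t) + t) ^ 2) by (apply pow_incr; lra).
  assert (Hm2 : 0 < m ^ 2) by (apply pow_lt; lra).
  unfold kernel, Rdiv. split.
  - apply Rmult_le_pos; [exact HP0 | apply Rlt_le, Rinv_0_lt_compat; lra].
  - rewrite <- (Rmult_1_l (/ m ^ 2)).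
    apply Rmult_le_compat; [exact HP0 | apply Rlt_le, Rinv_0_lt_compat; lra | exact HP1 |].
    apply Rinv_le_contravar; assumption.
Qed.

Lemma is_RInt_reflect_01 (f : R -> R) (l : R) :
  is_RInt f 0 1 l -> is_RInt (fun t => f (1 - t)) 0 1 l.
Proof.
  intros Hf.
  assert (H : is_RInt f (-1 * 0 + 1) (-1 * 1 + 1) (opp l)).
  { replace (-1 * 0 + 1) with 1 by ring. replace (-1 * 1 + 1) with 0 by ring.
    apply (is_RInt_swap (V:=R_NormedModule)), Hf. }
  apply (is_RInt_comp_lin (V:=R_NormedModule)), (is_RInt_opp (V:=R_NormedModule)) in H.
  rewrite opp_opp in H.
  revert H. apply is_RInt_ext. intros t _.
  unfold scal, opp; simpl. unfold mult; simpl. replace (-1 * t + 1) with (1 - t) by ring. ring.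
Qed.

(* Under [t -> 1 - t] the kernel transforms like [F] under [rho -> 1 / rho]. *)
Lemma RInt_kernel_inv n u : 0 < u ->
  RInt (kernel n (/ u)) 0 1 = u ^ 2 * RInt (kernel n u) 0 1.
Proof.
  intros Hu. apply is_RInt_unique.
  apply (is_RInt_ext (V:=R_NormedModule) (fun t => scal (u ^ 2) (kernel n u (1 - t)))).
  - intros t Ht. rewrite Rmin_left, Rmax_right in Ht by lra.
    unfold scal; simpl. unfold mult; simpl.
    unfold kernel. rewrite weight_sym. replace (1 - (1 - t)) with t by ring.
    assert (0 < u * t + (1 - t)) by nra.
    assert (0 < / u * (1 - t) + t) by (pose proof (Rinv_0_lt_compat u Hu); nra).
    field. split; lra.
  - apply (is_RInt_scal (V:=R_NormedModule)), is_RInt_reflect_01.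
    apply (RInt_correct (V:=R_CompleteNormedModule)), ex_RInt_kernel; lra.
Qed.

Lemma continuous_Fintegrand n rho s : 0 < rho -> 0 <= s -> continuous (Fintegrand n rho) s.
Proof.
  intros Hr Hs. apply (ex_derive_continuous (V:=R_NormedModule)).
  pose proof (pow_le s n Hs).
  unfold Fintegrand. auto_derive. repeat split; try exact I; apply Rgt_not_eq;
    [ | pose proof (Rmult_lt_0_compat rho rho Hr Hr) ]; nra.
Qed.

Lemma kernel_Fintegrand n rho t : 0 < rho -> 0 <= t < 1 ->
  kernel n (rho ^ 2) t = / (1 - t) ^ 2 * Fintegrand n rho (t / (1 - t)).
Proof.
  intros Hr Ht. unfold kernel, weight, weight_den, Fintegrand, Rdiv.
  rewrite Rpow_mult_distr, pow_inv.
  pose proof (pow_lt (1 - t) n ltac:(lra)). pose proof (pow_le t n ltac:(lra)).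
  assert (0 < rho ^ 2 * (1 - t) + t) by (pose proof (pow_lt rho 2 Hr); nra).
  assert (E1 : 1 + t ^ n * / (1 - t) ^ n = ((1 - t) ^ n + t ^ n) * / (1 - t) ^ n)
    by (field; lra).
  assert (E2 : rho ^ 2 + t * / (1 - t) = (rho ^ 2 * (1 - t) + t) * / (1 - t))
    by (field; lra).
  rewrite E1, E2. field. repeat split; lra.
Qed.

Lemma RInt_Fintegrand_kernel n rho M : 0 < rho -> 0 <= M ->
  RInt (Fintegrand n rho) 0 M = RInt (kernel n (rho ^ 2)) 0 (M / (1 + M)).
Proof.
  intros Hr HM. set (T := M / (1 + M)).
  assert (HT : 0 <= T < 1).
  { unfold T. split; [apply Rdiv_le_0_compat; lra|].
    apply (Rmult_lt_reg_r (1 + M)); [lra|].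
    unfold Rdiv. rewrite Rmult_assoc, Rinv_l by lra. lra. }
  assert (HgT : T / (1 - T) = M) by (unfold T; field; lra).
  transitivity (RInt (Fintegrand n rho) (0 / (1 - 0)) (T / (1 - T))).
  { f_equal; [unfold Rdiv; ring | symmetry; exact HgT]. }
  rewrite <- (RInt_comp (V:=R_CompleteNormedModule) (Fintegrand n rho)
                (fun t => t / (1 - t)) (fun t => / (1 - t) ^ 2)).
  - apply RInt_ext. intros t Ht. rewrite Rmin_left, Rmax_right in Ht by lra.
    symmetry. apply kernel_Fintegrand; [exact Hr | lra].
  - intros t Ht. rewrite Rmin_left, Rmax_right in Ht by lra.
    apply continuous_Fintegrand; [exact Hr | apply Rdiv_le_0_compat; lra].
  - intros t Ht. rewrite Rmin_left, Rmax_right in Ht by lra. split.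
    + auto_derive; [lra|]. field. lra.
    + apply (ex_derive_continuous (V:=R_NormedModule)). auto_derive. nra.
Qed.

Lemma abs_RInt_kernel_tail n u T : 0 < u -> 0 <= T <= 1 ->
  Rabs (RInt (kernel n u) T 1) <= (1 - T) / Rmin u 1 ^ 2.
Proof.
  intros Hu HT. unfold Rdiv.
  apply abs_RInt_le_const; [lra | apply ex_RInt_kernel; lra|].
  intros t Ht. destruct (kernel_le n u t Hu ltac:(lra)) as [K0 K1].
  rewrite Rabs_right by lra. exact K1.
Qed.

Lemma improper_integral_Fintegrand n rho L : 0 < rho ->
  improper_integral_0_inf (Fintegrand n rho) L -> L = RInt (kernel n (rho ^ 2)) 0 1.
Proof.
  intros Hr [Hint Hlim]. apply cond_eq. intros eps Heps.
  set (u := rho ^ 2). assert (Hu : 0 < u) by (apply pow_lt; lra).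
  set (B := / Rmin u 1 ^ 2).
  assert (HB : 0 < B) by (apply Rinv_0_lt_compat, pow_lt, Rmin_pos; lra).
  destruct (Hlim (eps / 2) ltac:(lra)) as [M0 HM0].
  set (M := Rmax M0 0 + 2 * B / eps).
  assert (HM : 0 <= M /\ M0 <= M).
  { pose proof (Rmax_l M0 0). pose proof (Rmax_r M0 0).
    assert (0 < 2 * B / eps) by (apply Rdiv_lt_0_compat; lra). unfold M. lra. }
  destruct (Hint M (proj1 HM)) as [pr].
  specialize (HM0 M pr (proj2 HM)).
  rewrite <- RInt_Reals, RInt_Fintegrand_kernel in HM0 by (tauto || lra).
  fold u in HM0. set (T := M / (1 + M)) in HM0.
  assert (H1T : 1 - T = / (1 + M)) by (unfold T; field; lra).
  assert (HT : 0 <= T <= 1).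
  { pose proof (Rinv_0_lt_compat (1 + M) ltac:(lra)).
    assert (/ (1 + M) <= 1) by (rewrite <- Rinv_1; apply Rinv_le_contravar; lra). lra. }
  assert (Htail : Rabs (RInt (kernel n u) T 1) < eps / 2).
  { eapply Rle_lt_trans; [apply abs_RInt_kernel_tail; assumption|].
    rewrite H1T. apply (Rmult_lt_reg_l (1 + M)); [lra|].
    assert (Hmin : 0 < Rmin u 1) by (apply Rmin_pos; lra).
    replace ((1 + M) * (/ (1 + M) / Rmin u 1 ^ 2)) with B by (unfold B; field; lra).
    unfold M. replace ((1 + (Rmax M0 0 + 2 * B / eps)) * (eps / 2))
      with ((1 + Rmax M0 0) * (eps / 2) + B) by (field; lra).
    pose proof (Rmax_r M0 0). nra. }
  rewrite <- (RInt_Chasles (V:=R_CompleteNormedModule) (kernel n u) 0 T 1)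
    by (apply ex_RInt_kernel; lra).
  replace (L - (plus (RInt (kernel n u) 0 T) (RInt (kernel n u) T 1)))
    with (- (RInt (kernel n u) 0 T - L) - RInt (kernel n u) T 1) by (unfold plus; simpl; ring).
  eapply Rle_lt_trans; [apply Rabs_triang|]. rewrite !Rabs_Ropp. lra.
Qed.

Definition metric_monos (c : R) : list mono := Mono c 0 0 0 2 :: nil.

Lemma eval_metric_monos n c x y t : 0 <= t <= 1 ->
  eval_monos n (metric_monos c) x y t = c * kernel n (x ^ 2 + y ^ 2) t.
Proof.
  intros Ht. cbn [eval_monos metric_monos]. unfold eval_mono, kernel, qden.
  cbn [coef xdeg ydeg wdeg qdeg]. rewrite clamp01_id, pow_inv by exact Ht. unfold Rdiv. ring.
Qed.

Lemma param_integral_metric_radial n c x y : 0 < x ^ 2 + y ^ 2 ->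
  param_integral n (metric_monos c) x y = c * RInt (kernel n (x ^ 2 + y ^ 2)) 0 1.
Proof.
  intros Hr. unfold param_integral.
  rewrite <- (RInt_scal (V:=R_CompleteNormedModule)) by (apply ex_RInt_kernel; lra).
  apply RInt_ext. intros t Ht. rewrite Rmin_left, Rmax_right in Ht by lra.
  apply eval_metric_monos. lra.
Qed.

Lemma param_integral_metric_pos n c x y : (3 <= n)%nat -> 0 < c ->
  0 < param_integral n (metric_monos c) x y.
Proof.
  intros Hn Hc. apply RInt_gt_0; [lra| |].
  - intros t Ht. rewrite eval_metric_monos by lra. unfold kernel.
    apply Rmult_lt_0_compat; [exact Hc|]. apply Rdiv_lt_0_compat.
    + apply weight_pos, Ht.
    + pose proof (qden_pos x y t ltac:(lra)) as Hq. unfold qden in Hq. apply pow_lt, Hq.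
  - intros t _. apply continuous3_slice_t, continuous3_eval_monos; [lia|].
    constructor; [unfold admissible; simpl; lia | constructor].
Qed.

Lemma sum_sqr_pos x y : (x, y) <> (0, 0) -> 0 < x ^ 2 + y ^ 2.
Proof.
  intros Hxy. destruct (Req_dec x 0); [destruct (Req_dec y 0); [subst; congruence|]|]; nra.
Qed.

Lemma sqrt_pow4 r : 0 <= r -> sqrt r ^ 4 = r ^ 2.
Proof. intros Hr. change 4%nat with (2 * 2)%nat. rewrite pow_mult, pow2_sqrt by exact Hr. reflexivity. Qed.

Theorem proposition4p5 (n : nat) (Hn : (5 <= n)%nat) (F : R -> R)
  (HF : forall rho, 0 < rho ->
     improper_integral_0_inf (Fintegrand n rho) (F rho / (PI * INR n ^ 2))) :
  (forall rho, 0 < rho -> F (/ rho) / rho ^ 4 = F rho) /\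
  exists G0 Ginf : R -> R -> R,
    Ck2 3 G0 /\ Ck2 3 Ginf /\
    (forall x y, 0 < G0 x y) /\ (forall x y, 0 < Ginf x y) /\
    (forall x y, (x, y) <> (0, 0) -> G0 x y = F (sqrt (x ^ 2 + y ^ 2))) /\
    (forall x y, (x, y) <> (0, 0) ->
       Ginf x y = F (/ sqrt (x ^ 2 + y ^ 2)) / (x ^ 2 + y ^ 2) ^ 2).
Proof.
  set (c := PI * INR n ^ 2).
  assert (Hc : 0 < c) by (apply Rmult_lt_0_compat; [apply PI_RGT_0 | apply pow_lt, lt_0_INR; lia]).
  assert (HFk : forall rho, 0 < rho -> F rho = c * RInt (kernel n (rho ^ 2)) 0 1).
  { intros rho Hr. rewrite <- (improper_integral_Fintegrand n rho _ Hr (HF rho Hr)).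
    fold c. field. lra. }
  assert (Hinv : forall rho, 0 < rho -> F (/ rho) / rho ^ 4 = F rho).
  { intros rho Hr. rewrite !HFk, pow_inv, RInt_kernel_inv by auto using Rinv_0_lt_compat, pow_lt.
    field. lra. }
  set (G := param_integral n (metric_monos c)).
  assert (HG : forall x y, (x, y) <> (0, 0) -> G x y = F (sqrt (x ^ 2 + y ^ 2))).
  { intros x y Hxy. pose proof (sum_sqr_pos x y Hxy).
    unfold G. rewrite param_integral_metric_radial, HFk, pow2_sqrt by (try apply sqrt_lt_R0; lra).
    reflexivity. }
  split; [exact Hinv|]. exists G, G.
  assert (HCk : Ck2 3 G).
  { apply Ck2_param_integral; [lia|]. constructor; [unfold admissible; simpl; lia | constructor]. }
  assert (Hpos : forall x y, 0 < G x y) by (intros; apply param_integral_metric_pos; [lia | exact Hc]).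
  refine (conj HCk (conj HCk (conj Hpos (conj Hpos (conj HG _))))).
  intros x y Hxy. pose proof (sum_sqr_pos x y Hxy).
  rewrite HG, <- (sqrt_pow4 (x ^ 2 + y ^ 2)) by (assumption || lra).
  symmetry. apply Hinv, sqrt_lt_R0. assumption.
Qed.
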